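(* Let $m,n$ be positive integers with $n\ge 2$, let $\Pi$ be a regular $(nm+2)$-gon, and let $\Gamma^m_{A_{n-1}}$ and $\tau_m$ be the quiver of $m$-diagonals of $\Pi$ and the rotation map described in the context. Then $(\Gamma^m_{A_{n-1}},\tau_m)$ is a connected stable translation quiver, i.e. it is not a disjoint union of two non-empty stable translation subquivers.
   Context: The vertices of $\Pi$ are labelled $1,\dots,nm+2$ clockwise, and vertex labels are taken modulo $nm+2$. A diagonal with endpoints $i,j$ is written $(i,j)=(j,i)$. An $m$-diagonal is a diagonal of $\Pi$ that divides $\Pi$ into an $(mj+2)$-gon and an $(m(n-j)+2)$-gon for some integer $1\le j\le n-1$. The quiver $\Gamma^m_{A_{n-1}}$ has as vertices the $m$-diagonals of $\Pi$. There is an arrow $D\to D'$ (and at most one) exactly when $D$ and $D'$ share an endpoint $i$, with other endpoints $j$ and $j'$ respectively, such that $D$, $D'$ and the boundary arc from $j$ to $j'$ not containing $i$ bound an $(m+2)$-gon, and $D$ is rotated onto the line through $D'$ by a clockwise rotation about $i$. Equivalently, $D=(i,j)$ and $D'=(i,j+m)$ are both $m$-diagonals. The map $\tau_m$ sends an $m$-diagonal to its image under the anticlockwise rotation of $\Pi$ about its centre through $2m\pi/(nm+2)$, that is $(i,j)\mapsto(i-m,j-m)$. A translation quiver is a pair $(\Gamma,\tau)$ with the following properties: $\Gamma$ is a locally finite quiver with vertex set $\Gamma_0$; $\tau:\Gamma_0'\to\Gamma_0$ is an injective map defined on a subset $\Gamma_0'\subseteq\Gamma_0$; and for all $X\in\Gamma_0$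 and $Y\in\Gamma_0'$ the number of arrows $X\to Y$ equals the number of arrows $\tau(Y)\to X$. The translation quiver is stable if $\Gamma_0'=\Gamma_0$ and $\tau$ is bijective. *)

From HB Require Import structures.
From mathcomp Require Import all_boot all_order all_algebra.
Set Implicit Arguments. Unset Strict Implicit. Unset Printing Implicit Defensive.
Import GRing.Theory.
Local Open Scope ring_scope.

(* A finite quiver on the finType V is given by its arrow multiplicities
   narr X Y = number of arrows X -> Y (a finite quiver is locally finite). *)
Definition stable_translation_quiver (V : finType) (narr : V -> V -> nat)
  (tau : V -> V) : Prop :=
  bijective tau /\ (forall X Y : V, narr X Y = narr (tau Y) X).

(* (V, narr, tau) is the disjoint union of two non-empty stable translation
   subquivers, with vertex sets A and ~: A: no arrows between A and its
   complement, and tau restricts to a bijection of A (and of ~: A). *)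
Definition disjoint_union_stq (V : finType) (narr : V -> V -> nat)
  (tau : V -> V) : Prop :=
  exists A : {set V},
    [/\ A != set0, ~: A != set0,
        (forall x, (tau x \in A) = (x \in A)) &
        (forall x y, narr x y != 0%N -> (x \in A) = (y \in A))].

Definition connected_stq (V : finType) (narr : V -> V -> nat) (tau : V -> V)
  : Prop := ~ disjoint_union_stq narr tau.

(* Vertices are labelled 0, ..., n*m+1 clockwise (labels modulo n*m+2), i.e.
   by 'I_(n*m).+2, with its Z/(nm+2)Z additive structure. *)

Definition cw (p : nat) (i j : 'I_p.+1) : nat := nat_of_ord (j - i).

(* (i,j) is an m-diagonal: going clockwise from i to j, the boundary arc
   together with the diagonal bounds an (m k + 2)-gon, 1 <= k <= n-1
   (the other side is then an (m(n-k)+2)-gon). *)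
Definition is_mdiag (n m : nat) (i j : 'I_(n * m).+2) : bool :=
  [exists k : 'I_n, (0 < (k : nat))%N && (cw i j == m * k + 1)%N].

Definition mdiagb (n m : nat) (D : {set 'I_(n * m).+2}) : bool :=
  [exists i, exists j, (D == [set i; j]) && @is_mdiag n m i j].

Definition mdiag (n m : nat) := {D : {set 'I_(n * m).+2} | @mdiagb n m D}.

Definition Gamma_arr (n m : nat) (D D' : mdiag n m) : nat :=
  nat_of_bool [exists i, exists j,
    (val D == [set i; j]) && (val D' == [set i; j + inZp m])].

Definition rotD (n m : nat) (D : {set 'I_(n * m).+2}) : {set 'I_(n * m).+2} :=
  [set x - inZp m | x in D].

Lemma cw_rot (p : nat) (a i j : 'I_p.+1) : cw (i - a) (j - a) = cw i j.
Proof. by rewrite /cw opprB addrA subrK. Qed.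

Lemma mdiagb_rot (n m : nat) (D : {set 'I_(n * m).+2}) :
  @mdiagb n m D -> @mdiagb n m (@rotD n m D).
Proof.
case/existsP=> i /existsP [j /andP [/eqP -> H]].
apply/existsP; exists (i - inZp m); apply/existsP; exists (j - inZp m).
rewrite /rotD imsetU1 imset_set1 eqxx /=.
by move: H; rewrite /is_mdiag cw_rot.
Qed.

Definition tau_m (n m : nat) (D : mdiag n m) : mdiag n m :=
  exist _ (@rotD n m (val D)) (mdiagb_rot (valP D)).

(* Every m-diagonal is (i, i + m k + 1) for some vertex i and some 0 < k < n.
   Inside A, a set of m-diagonals closed under arrows and tau_m, the arrows
   (i, i + m k + 1) -> (i, i + m (k + 1) + 1) identify all diagonals issued
   from i with the short one (i, i + m + 1).  Reading that short diagonal from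
   its other end, it is the long one (i + m + 1, i), hence lies in A together
   with (i + m + 1, i + 2 m + 2), whose rotation by tau_m is (i + 1, i + m + 2).
   So A contains either all short diagonals or none, hence all or no vertices. *)

From Pilot Require Import Defs.
From mathcomp Require Import all_boot all_order all_algebra.
From mathcomp Require Import ring zify.
Import GRing.Theory.
Local Open Scope ring_scope.

Section MDiagonals.
Variables n m : nat.
Local Notation V := 'I_(n * m).+2.
Local Notation MD := (mdiag n m).

Definition mdiag_set (i : V) (k : nat) : {set V} :=
  [set i; i + (m * k + 1)%N%:R].

Lemma leq_mk_mn {k} : (k < n)%N -> (m * k <= m * n)%N.
Proof. by move=> lt_kn; rewrite leq_mul2l ltnW ?orbT. Qed.

Lemma mdiagb_set i k : (0 < k < n)%N -> mdiagb (mdiag_set i k).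
Proof.
case/andP=> k_gt0 lt_kn; apply/existsP; exists i; apply/existsP.
exists (i + (m * k + 1)%N%:R); rewrite eqxx; apply/existsP.
exists (Ordinal lt_kn); rewrite /= k_gt0 /cw addrAC subrr add0r Zp_nat /=.
by rewrite modn_small // [(n * m)%N]mulnC; have := leq_mk_mn lt_kn; lia.
Qed.

Definition mdiag_at i {k} (h : (0 < k < n)%N) : MD :=
  exist _ (mdiag_set i k) (mdiagb_set i k h).

Lemma mdiag_atP (D : MD) : exists i k (h : (0 < k < n)%N), D = mdiag_at i h.
Proof.
case: D => S mdS.
case/existsP: (mdS) => i /existsP[j /andP[/eqP S_ij /existsP[k /andP[k_gt0 /eqP cw_ij]]]].
have h : (0 < k < n)%N by rewrite k_gt0 ltn_ord.
exists i, k, h; apply: val_inj; rewrite /= S_ij /mdiag_set.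
suff -> : j = i + (m * k + 1)%N%:R by [].
by apply/eqP; rewrite addrC -subr_eq; apply/eqP/val_inj; rewrite Zp_nat /= -cw_ij modZp.
Qed.

Lemma Gamma_arr_at_succ i k (h : (0 < k < n)%N) (h' : (0 < k.+1 < n)%N) :
  Gamma_arr (mdiag_at i h) (mdiag_at i h') = 1%N.
Proof.
apply/eqP; rewrite eqb1; apply/existsP; exists i; apply/existsP.
exists (i + (m * k + 1)%N%:R); rewrite eqxx /= -Zp_nat /mdiag_set.
by apply/eqP; congr [set i; _]; ring.
Qed.

Lemma mdiag_at_flip i k (h : (0 < k < n)%N) (h' : (0 < n - k < n)%N) :
  mdiag_at i h = mdiag_at (i + (m * k + 1)%N%:R) h'.
Proof.
apply: val_inj; rewrite /= /mdiag_set setUC -addrA -natrD.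
have -> : (m * k + 1 + (m * (n - k) + 1) = (n * m).+2)%N.
  have := leq_mk_mn (andP h).2.
  by rewrite mulnBr mulnC; lia.
by rewrite (@pchar_Zp (n * m).+2) // addr0.
Qed.

Lemma rotD_set2 (a b : V) :
  @Defs.rotD n m [set a; b] = [set a - inZp m; b - inZp m].
Proof. by rewrite /Defs.rotD imsetU1 imset_set1. Qed.

Lemma tau_m_at i k (h : (0 < k < n)%N) :
  tau_m (mdiag_at i h) = mdiag_at (i - m%:R) h.
Proof.
apply: val_inj; rewrite /= /mdiag_set rotD_set2 -Zp_nat.
by congr [set _; _]; ring.
Qed.

Lemma rotD_inj : injective (@Defs.rotD n m).
Proof. by apply: imset_inj => a b /(congr1 (+%R^~ (inZp m))); rewrite !subrK. Qed.

Lemma tau_m_bij : bijective (@tau_m n m).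
Proof. by apply: injF_bij => D D' /(congr1 val)/rotD_inj; apply: val_inj. Qed.

Lemma Gamma_arr_tau (X Y : MD) : Gamma_arr X Y = Gamma_arr (tau_m Y) X.
Proof.
rewrite /Gamma_arr; congr nat_of_bool; apply/idP/idP.
  case/existsP=> i /existsP[j /andP[/eqP EX /eqP EY]].
  apply/existsP; exists j; apply/existsP; exists (i - inZp m).
  by rewrite /= EY rotD_set2 addrK EX subrK ![[set j; _]]setUC !eqxx.
case/existsP=> a /existsP[b /andP[/eqP ET /eqP EX]].
apply/existsP; exists (b + inZp m); apply/existsP; exists a.
rewrite EX setUC eqxx /=; apply/eqP; rewrite setUC; apply: rotD_inj.
by rewrite rotD_set2 !addrK.
Qed.

Section ClosedSet.
Variable A : {set MD}.
Hypothesis tau_mA : forall D, (tau_m D \in A) = (D \in A).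
Hypothesis Gamma_arrA : forall D D', Gamma_arr D D' != 0%N -> (D \in A) = (D' \in A).
Hypothesis n_gt1 : (1 < n)%N.
Local Notation short i := (@mdiag_at i 1 n_gt1).

Lemma mem_mdiag_at_short i k (h : (0 < k < n)%N) :
  (mdiag_at i h \in A) = (short i \in A).
Proof.
elim: k h => [|[|k] IHk] h //.
  by congr (_ \in A); apply: val_inj.
have h' : (0 < k.+1 < n)%N by move: h; lia.
by rewrite -(IHk h'); apply/esym/Gamma_arrA; rewrite Gamma_arr_at_succ.
Qed.

Lemma mem_short_succ i : (short (i + 1) \in A) = (short i \in A).
Proof.
have h' : (0 < n - 1 < n)%N by move: n_gt1; lia.
have -> : short (i + 1) = tau_m (short (i + (m * 1 + 1)%N%:R)).
  by rewrite tau_m_at; apply: val_inj; rewrite /= /mdiag_set; congr [set _; _]; ring.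
by rewrite tau_mA (mdiag_at_flip i 1 n_gt1 h') mem_mdiag_at_short.
Qed.

Lemma mem_short (i : V) : (short i \in A) = (short 0 \in A).
Proof.
rewrite -(natr_Zp i); elim: (i : nat) => [|t IHt]; first by rewrite mulr0n.
by rewrite mulrSr mem_short_succ.
Qed.

Lemma mem_closed_const (D D' : MD) : (D \in A) = (D' \in A).
Proof.
have [i [k [h ->]]] := mdiag_atP D; have [i' [k' [h' ->]]] := mdiag_atP D'.
by rewrite !mem_mdiag_at_short !mem_short.
Qed.

End ClosedSet.

End MDiagonals.

Theorem proposition2p3 (m n : nat) (hm : (0 < m)%N) (hn : (2 <= n)%N) :
  stable_translation_quiver (@Gamma_arr n m) (@tau_m n m) /\
  connected_stq (@Gamma_arr n m) (@tau_m n m).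
Proof.
split; first by split; [exact: tau_m_bij | exact: Gamma_arr_tau].
case=> A [/set0Pn[D DA] /set0Pn[D' D'nA] tau_mA Gamma_arrA].
by move: D'nA; rewrite inE (@mem_closed_const n m A tau_mA Gamma_arrA hn D' D) DA.
Qed.
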